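(* For every integer $i\ge2$ and every graph $G$, $\hom(S_{2,1^{i-2}};G)\cdot\hom(S_{2,1^{i}};G)\ge \hom(S_{2,1^{i-1}};G)^2$.
   Context: All graphs are finite; $\hom(H;G)$ is the number of graph homomorphisms from $H$ to $G$. For $k\ge0$, $S_{2,1^k}$ is the tree with vertex set $\{1,\ldots,k+3\}$ and edge set $\{\{1,j\}:2\le j\le k+2\}\cup\{\{k+2,k+3\}\}$. *)

From mathcomp Require Import all_boot all_order.
Set Implicit Arguments. Unset Strict Implicit. Unset Printing Implicit Defensive.

(* A finite (simple) graph: vertex type V : finType, adjacency E : rel V,
   required to be symmetric and irreflexive (stated as hypotheses in the theorem). *)

Definition hom (VH : finType) (EH : rel VH) (V : finType) (E : rel V) : nat :=
  #|[set f : {ffun VH -> V} | [forall x, forall y, EH x y ==> E (f x) (f y)]]|.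

Definition S_edge_lbl (k p q : nat) : bool :=
  [|| (p == 1) && (2 <= q <= k + 2),
      (q == 1) && (2 <= p <= k + 2),
      (p == k + 2) && (q == k + 3)
    | (q == k + 2) && (p == k + 3)].

(* Vertex a : 'I_(k+3) carries label a+1. *)
Definition S_rel (k : nat) : rel 'I_(k + 3) :=
  fun a b => S_edge_lbl k (val a).+1 (val b).+1.

Definition homS (k : nat) (V : finType) (E : rel V) : nat :=
  @hom 'I_(k + 3) (@S_rel k) V E.

From mathcomp Require Import all_boot all_order zify ring.
Set Implicit Arguments. Unset Strict Implicit. Unset Printing Implicit Defensive.

(* Fixing the images v of the centre and u of its neighbour of degree 2, the
   remaining k leaves map independently into N(v) and the last vertex into
   N(u).  Hence hom(S_{2,1^k}; G) = sum_v d(v)^k s(v) with s(v) the sum of the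
   degrees of the neighbours of v: these numbers are the moments of the
   degree function for the weights s, and moment sequences are log-convex by
   the Cauchy-Schwarz inequality. *)

Lemma weighted_sum_sqr_le (I : finType) (a w : I -> nat) :
  (\sum_i a i * w i) ^ 2 <= (\sum_i w i) * (\sum_i a i ^ 2 * w i).
Proof.
rewrite -(leq_pmul2l (isT : 0 < 2)).
have -> : 2 * (\sum_i a i * w i) ^ 2 =
          \sum_i \sum_j 2 * (a i * a j) * (w i * w j).
  rewrite -mulnn big_distrlr big_distrr /=; apply: eq_bigr => i _.
  by rewrite big_distrr /=; apply: eq_bigr => j _; ring.
have -> : 2 * ((\sum_i w i) * (\sum_i a i ^ 2 * w i)) =
          \sum_i \sum_j (a i ^ 2 + a j ^ 2) * (w i * w j).
  rewrite mul2n -addnn big_distrlr {1}exchange_big -big_split /=.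
  by apply: eq_bigr => i _; rewrite -big_split /=; apply: eq_bigr => j _; ring.
by apply: leq_sum => i _; apply: leq_sum => j _; rewrite leq_mul2r nat_Cauchy orbT.
Qed.

Lemma sum_pow_sqr_le (I : finType) (a b : I -> nat) (k : nat) :
  (\sum_i a i ^ k.+1 * b i) ^ 2
    <= (\sum_i a i ^ k * b i) * (\sum_i a i ^ k.+2 * b i).
Proof.
have -> : \sum_i a i ^ k.+1 * b i = \sum_i a i * (a i ^ k * b i).
  by apply: eq_bigr => i _; rewrite mulnA -expnS.
have -> : \sum_i a i ^ k.+2 * b i = \sum_i a i ^ 2 * (a i ^ k * b i).
  by apply: eq_bigr => i _; rewrite mulnA -expnD add2n.
exact: weighted_sum_sqr_le.
Qed.

Section HomSCount.
Variables (V : finType) (E : rel V) (k : nat).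
Hypothesis symE : symmetric E.

Definition deg (v : V) : nat := #|[pred w | E v w]|.

Definition nbr_deg_sum (v : V) : nat := \sum_(u | E v u) deg u.

Fact center_subproof : 0 < k + 3. Proof. by rewrite addn3. Qed.
Fact joint_subproof : k + 1 < k + 3. Proof. by rewrite ltn_add2l. Qed.
Fact tip_subproof : k + 2 < k + 3. Proof. by rewrite ltn_add2l. Qed.

Definition center := Ordinal center_subproof.
Definition joint := Ordinal joint_subproof.
Definition tip := Ordinal tip_subproof.

Lemma S_relE x y :
  S_rel x y = [|| [&& x == center, y != center & y != tip],
                  [&& y == center, x != center & x != tip],
                  (x == joint) && (y == tip) | (y == joint) && (x == tip)].
Proof.
rewrite /S_rel /S_edge_lbl -!val_eqE /=.
have hx := ltn_ord x; have hy := ltn_ord y.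
by apply/idP/idP; lia.
Qed.

Lemma joint_eq_center : (joint == center) = false.
Proof. by rewrite -val_eqE /= addn1. Qed.

Lemma tip_eq_center : (tip == center) = false.
Proof. by rewrite -val_eqE /= addn2. Qed.

Lemma tip_eq_joint : (tip == joint) = false.
Proof. by rewrite -val_eqE /= eqn_add2l. Qed.

Lemma homS_condE (f : {ffun 'I_(k + 3) -> V}) :
  [forall x, forall y, S_rel x y ==> E (f x) (f y)] =
  [forall y, (y != center) && (y != tip) ==> E (f center) (f y)]
    && E (f joint) (f tip).
Proof.
apply/idP/andP => [/forallP hom | [/forallP hc hjt]].
  split.
    apply/forallP=> y; apply/implyP=> hy.
    by have /forallP/(_ y)/implyP := hom center; apply; rewrite S_relE eqxx hy.
  have /forallP/(_ tip)/implyP := hom joint; apply.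
  by rewrite S_relE !eqxx /= !orbT.
apply/forallP=> x; apply/forallP=> y; apply/implyP; rewrite S_relE.
case/or4P=> [/and3P[/eqP-> ? ?] | /and3P[/eqP-> ? ?] | /andP[/eqP-> /eqP->] |
             /andP[/eqP-> /eqP->]] //; last by rewrite symE.
  by apply: (implyP (hc y)); apply/andP.
by rewrite symE; apply: (implyP (hc x)); apply/andP.
Qed.

Definition fiber_pred (v u : V) (x : 'I_(k + 3)) : pred V :=
  if x == center then pred1 v else if x == joint then pred1 u
  else if x == tip then [pred w | E u w] else [pred w | E v w].

Lemma homS_fiberE (v u : V) (f : {ffun 'I_(k + 3) -> V}) : E v u ->
  [&& [forall x, forall y, S_rel x y ==> E (f x) (f y)],
      f center == v & f joint == u] = (f \in family (fiber_pred v u)).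
Proof.
move=> Evu; rewrite homS_condE; apply/idP/familyP.
  case/and3P=> /andP[/forallP hc hjt] /eqP fc /eqP fj x; rewrite /fiber_pred.
  case: eqP => [->|/eqP xc]; first by rewrite fc inE.
  case: eqP => [->|/eqP xj]; first by rewrite fj inE.
  case: eqP => [->|/eqP xt]; first by rewrite inE -fj.
  by rewrite inE -fc; apply: (implyP (hc x)); rewrite xc xt.
move=> hf.
have := hf center; rewrite /fiber_pred eqxx inE => /eqP fc.
have := hf joint; rewrite /fiber_pred joint_eq_center eqxx inE => /eqP fj.
rewrite fc fj !eqxx !andbT; apply/andP; split.
  apply/forallP=> y; apply/implyP=> /andP[yc yt].
  case: (y =P joint) => [->|/eqP yj]; first by rewrite fj.
  by have := hf y; rewrite /fiber_pred (negbTE yc) (negbTE yj) (negbTE yt) inE.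
by have := hf tip; rewrite /fiber_pred tip_eq_center tip_eq_joint eqxx inE.
Qed.

Lemma card_leaves :
  #|[pred x : 'I_(k + 3) | (x != center) && (x != joint) && (x != tip)]| = k.
Proof.
transitivity #|[predD1 [predD1 [predD1 'I_(k + 3) & center] & joint] & tip]|.
  by apply: eq_card => x; rewrite !inE; do 3!case: (_ != _).
have := card_ord (k + 3).
rewrite (cardD1 center) (cardD1 joint) (cardD1 tip) !inE.
rewrite joint_eq_center tip_eq_center tip_eq_joint /= !add1n.
by move=> /eqP; rewrite -addn3 eqn_add2r => /eqP.
Qed.

Lemma card_homS_fiber (v u : V) :
  #|family (fiber_pred v u)| = deg v ^ k * deg u.
Proof.
rewrite card_family foldrE big_map big_enum /=.
rewrite (bigD1 center) // (bigD1 joint) ?joint_eq_center //.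
rewrite (bigD1 tip) ?tip_eq_center ?tip_eq_joint //=.
rewrite (eq_bigr (fun=> deg v)) => [|x /andP[/andP[xc xj] xt]]; last first.
  by rewrite /fiber_pred (negbTE xc) (negbTE xj) (negbTE xt).
rewrite (@prod_nat_const _ [pred x | (x != center) && (x != joint) && (x != tip)]).
rewrite /fiber_pred eqxx joint_eq_center tip_eq_center tip_eq_joint !eqxx.
by rewrite !card1 !mul1n card_leaves mulnC.
Qed.

Lemma homSE : homS k E = \sum_v deg v ^ k * nbr_deg_sum v.
Proof.
rewrite /homS /hom -sum1_card.
rewrite (partition_big (fun f : {ffun _} => f center) xpredT) //=.
apply: eq_bigr => v _; rewrite /nbr_deg_sum big_distrr [RHS]big_mkcond.
rewrite (partition_big (fun f : {ffun _} => f joint) xpredT) //=.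
apply: eq_bigr => u _; case: ifP => Evu.
  rewrite -card_homS_fiber -sum1_card; apply: eq_bigl => f.
  by rewrite inE -homS_fiberE // -andbA.
apply: big_pred0 => f; apply/negbTE; apply: contraFN Evu.
rewrite inE homS_condE => /andP[/andP[/andP[/forallP hc _] /eqP <-] /eqP <-].
by apply: (implyP (hc joint)); rewrite joint_eq_center eq_sym tip_eq_joint.
Qed.
End HomSCount.

Theorem theorem3p4 (i : nat) (V : finType) (E : rel V) :
  2 <= i -> symmetric E -> irreflexive E ->
  homS (i - 2) E * homS i E >= (homS (i - 1) E) ^ 2.
Proof.
(* Loops do not matter: the counting formula holds for any symmetric relation. *)
case: i => [|[|k]] // _ symE _.
rewrite !subSS !subn0 !(homSE _ symE).
exact: sum_pow_sqr_le.
Qed.
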